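(* Consider the uplink system described in the context and the problem $$\text{(P)}:\ \max\ \log\Big|\sum_{v=1}^U \mathbf G_v(\mathbf w_v)\mathbf Q_v\mathbf G_v^H(\mathbf w_v)+\mathbf I_M\Big|$$ over $\mathbf Q_v\in\mathbb C^{N_v\times N_v}$, $\mathbf Q_v\succeq\mathbf 0$, $\mathrm{tr}(\mathbf Q_v)\le P_v$, and $\mathbf w_v\in\mathbb R^{N_v}$ with $0\le w_{v,n}\le W_v$ and $w_{v,n}\ne w_{v,n'}$ for $n\neq n'$, for all $v\in\{1,\dots,U\}$. Suppose that for some user $u$ we have $L_u=1$. Let $\mathcal U'=\{1,\dots,U\}\setminus\{u\}$. Then (P) is equivalent (in the sense of having the same optimal objective value) to the problem $$\max\ \log\Big|\sum_{v\in\mathcal U'}\mathbf G_v(\mathbf w_v)\mathbf Q_v\mathbf G_v^H(\mathbf w_v)+MN_uP_u|\gamma_{u,1}|^2\mathbf a_{u,\mathrm R}(\beta_{u,1})\mathbf a_{u,\mathrm R}^H(\beta_{u,1})+\mathbf I_M\Big|$$ over $\mathbf Q_v\succeq\mathbf 0$, $\mathrm{tr}(\mathbf Q_v)\le P_v$, $0\le w_{v,n}\le W_v$, $w_{v,n}\ne w_{v,n'}$ ($n\ne n'$), for all $v\in\mathcal U'$.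
   Context: A base station (BS) has an $M$-antenna uniform linear array with spacing $d=\lambda/2$ ($\lambda$ the wavelength). User $v\in\{1,\dots,U\}$ has $N_v$ antennas at positions $w_{v,1},\dots,w_{v,N_v}\in[0,W_v]$ on a line, power budget $P_v>0$, and $L_v$ propagation paths to the BS with complex gains $\gamma_{v,l}$, angles of arrival $\beta_{v,l}\in[0,\pi]$ and angles of departure $\theta_{v,l}\in[0,\pi]$. Define $\mathbf a_{v,\mathrm R}(\beta)=\frac1{\sqrt M}[1,e^{-j\frac{2\pi}{\lambda}d\cos\beta},\dots,e^{-j\frac{2\pi}{\lambda}(M-1)d\cos\beta}]^T$, $\mathbf a_{v,\mathrm T}(\theta,\mathbf w_v)=\frac1{\sqrt{N_v}}[e^{-j\frac{2\pi}{\lambda}w_{v,1}\cos\theta},\dots,e^{-j\frac{2\pi}{\lambda}w_{v,N_v}\cos\theta}]^T$, $\boldsymbol\Gamma_v=\mathrm{diag}(\gamma_{v,1},\dots,\gamma_{v,L_v})$, $\mathbf A_{v,\mathrm R}=[\mathbf a_{v,\mathrm R}(\beta_{v,l})]_{l=1}^{L_v}\in\mathbb C^{M\times L_v}$, $\mathbf A_{v,\mathrm T}(\mathbf w_v)=[\mathbf a_{v,\mathrm T}(\theta_{v,l},\mathbf w_v)]_{l=1}^{L_v}\in\mathbb C^{N_v\times L_v}$, and the channel $\mathbf G_v(\mathbf w_v)=\sqrt{MN_v}\,\mathbf A_{v,\mathrm R}\boldsymbol\Gamma_v\mathbf A_{v,\mathrm T}^H(\mathbf w_v)$. $|\cdot|$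 denotes determinant. *)

From mathcomp Require Import all_boot all_order all_algebra.
From mathcomp Require Import complex.
From mathcomp Require Import all_classical all_reals all_analysis.

Set Implicit Arguments.
Unset Strict Implicit.
Unset Printing Implicit Defensive.

Import Order.TTheory GRing.Theory Num.Theory.
Local Open Scope ring_scope.

Local Open Scope sesquilinear_scope.

Section Channel.
Variable R : realType.
Local Notation C := R[i].

Definition expi (t : R) : C := Complex (cos t) (sin t).

(* the ULA steering vector at the BS, with d = lambda/2 *)
Definition aR (M : nat) (lam beta : R) : 'cV[C]_M :=
  \col_(i < M) (((Num.sqrt (M%:R : R))^-1)%:C%C *
     expi (- (2 * pi / lam) * ((nat_of_ord i)%:R * (lam / 2)) * cos beta)).

Definition aT (N : nat) (lam theta : R) (w : 'I_N -> R) : 'cV[C]_N :=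
  \col_(n < N) (((Num.sqrt (N%:R : R))^-1)%:C%C *
     expi (- (2 * pi / lam) * w n * cos theta)).

Definition ARmx (M L : nat) (lam : R) (beta : 'I_L -> R) : 'M[C]_(M, L) :=
  \matrix_(m < M, l < L) aR M lam (beta l) m 0.

Definition ATmx (N L : nat) (lam : R) (theta : 'I_L -> R) (w : 'I_N -> R)
  : 'M[C]_(N, L) :=
  \matrix_(n < N, l < L) aT lam (theta l) w n 0.

Definition Gammamx (L : nat) (gamma : 'I_L -> C) : 'M[C]_L :=
  diag_mx (\row_(l < L) gamma l).

Definition chan (M N L : nat) (lam : R) (gamma : 'I_L -> C)
  (beta theta : 'I_L -> R) (w : 'I_N -> R) : 'M[C]_(M, N) :=
  (Num.sqrt ((M * N)%:R : R))%:C%C *: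
    (ARmx M lam beta *m Gammamx gamma *m (ATmx lam theta w) ^t*).

Definition psdmx (n : nat) (Q : 'M[C]_n) : Prop :=
  Q ^t* = Q /\ forall x : 'cV[C]_n, 0 <= (x ^t* *m Q *m x) 0 0.

Definition user_feasible (N : nat) (Pv Wv : R) (Q : 'M[C]_N) (w : 'I_N -> R)
  : Prop :=
  [/\ psdmx Q, \tr Q <= Pv%:C%C,
      (forall n, 0 <= w n <= Wv) & injective w].

End Channel.

From mathcomp Require Import all_boot all_order all_algebra.
From mathcomp Require Import complex.
From mathcomp Require Import all_classical all_reals all_analysis.
From mathcomp Require Import ring.

(* With a single path, user u's channel is the rank-one matrix
   c a_R a_T(w)^H with |c|^2 = M N_u |gamma|^2 and ||a_T(w)|| = 1, so its
   contribution to the covariance is |c|^2 (a_T^H Q a_T) a_R a_R^H, where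
   0 <= a_T^H Q a_T <= tr Q <= P_u.  By the matrix determinant lemma,
   det (H + s a_R a_R^H + I) = det (H + I) (1 + s a_R^H (H + I)^-1 a_R)
   is nondecreasing in s >= 0 when H is positive semidefinite, so user u
   contributes at most P_u |c|^2 a_R a_R^H, and this is attained by
   Q_u = P_u a_T a_T^H whatever the admissible antenna positions. *)

Set Implicit Arguments.
Unset Strict Implicit.
Unset Printing Implicit Defensive.

Import Order.TTheory GRing.Theory Num.Theory.
Local Open Scope ring_scope.
Local Open Scope sesquilinear_scope.

Lemma det_1_add_rank1 (R : comPzRingType) n (x : 'cV[R]_n) (y : 'rV[R]_n) :
  \det (1%:M + x *m y) = 1 + (y *m x) 0 0.
Proof.
pose Lo : 'M[R]_(n + 1) := block_mx 1%:M 0 y 1%:M.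
pose A : 'M[R]_(n + 1) := block_mx (1%:M + x *m y) x 0 1%:M.
pose Ro : 'M[R]_(n + 1) := block_mx 1%:M 0 (- y) 1%:M.
have LAR : Lo *m A *m Ro = block_mx 1%:M x 0 (1%:M + y *m x).
  rewrite !mulmx_block !mulmx0 !mul0mx !mulmx1 !mul1mx !addr0 !add0r.
  congr block_mx; first by rewrite mulmxN addrK.
    rewrite mulmxN mulmxDr mulmxDl mulmx1 mul1mx mulmxA.
    by rewrite [y *m x *m y + y]addrC subrr.
  by rewrite addrC.
move/(congr1 determinant): LAR.
rewrite !det_mulmx det_lblock det_ublock det_lblock det_ublock !det1 !mul1r !mulr1.
by rewrite det_mx11 !mxE eqxx mulr1n.
Qed.

Lemma det_add_rank1 (R : comUnitRingType) n (A : 'M[R]_n) (x : 'cV[R]_n)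
    (y : 'rV[R]_n) : A \in unitmx ->
  \det (A + x *m y) = \det A * (1 + (y *m invmx A *m x) 0 0).
Proof.
move=> A_unit; have -> : A + x *m y = A *m (1%:M + invmx A *m x *m y).
  by rewrite mulmxDr mulmx1 !mulmxA mulmxV // mul1mx.
by rewrite det_mulmx det_1_add_rank1 !mulmxA.
Qed.

Section PositiveSemidefinite.
Variable C : numClosedFieldType.

Lemma trmxC_mul m n p (A : 'M[C]_(m, n)) (B : 'M[C]_(n, p)) :
  (A *m B) ^t* = B ^t* *m A ^t*.
Proof. by rewrite trmx_mul map_mxM. Qed.

Lemma trmxCD m n (A B : 'M[C]_(m, n)) : (A + B) ^t* = A ^t* + B ^t*.
Proof. by rewrite linearD map_mxD. Qed.

Lemma trmxCB m n (A B : 'M[C]_(m, n)) : (A - B) ^t* = A ^t* - B ^t*.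
Proof. by rewrite linearB map_mxB. Qed.

Lemma trmxCZ m n a (A : 'M[C]_(m, n)) : (a *: A) ^t* = a^* *: A ^t*.
Proof. by rewrite linearZ map_mxZ. Qed.

Lemma trmxC1 n : (1%:M : 'M[C]_n) ^t* = 1%:M.
Proof. by rewrite trmx1 map_mx1. Qed.

Lemma trmxC_mul_self_ge0 n (x : 'cV[C]_n) : 0 <= (x ^t* *m x) 0 0.
Proof.
rewrite mxE; apply: sumr_ge0 => i _; rewrite !mxE mulrC; exact: mul_conjC_ge0.
Qed.

Lemma congruence_diag_entry m n (P : 'M[C]_(m, n)) (A : 'M[C]_n) i :
  (P *m A *m P ^t*) i i = (row i P *m A *m (row i P) ^t*) 0 0.
Proof.
rewrite !mxE; apply: eq_bigr => j _; rewrite !mxE; congr (_ * _).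
by apply: eq_bigr => k _; rewrite !mxE.
Qed.

Lemma congruence_rank1 m n (c : C) (a : 'cV[C]_m) (b : 'cV[C]_n) (Q : 'M[C]_n) :
  (c *: (a *m b ^t*)) *m Q *m (c *: (a *m b ^t*)) ^t* =
  (c * c^* * (b ^t* *m Q *m b) 0 0) *: (a *m a ^t*).
Proof.
rewrite trmxCZ trmxC_mul trmxCK -!scalemxAl -!scalemxAr !scalerA.
have -> : a *m b ^t* *m Q *m (b *m a ^t*) = a *m (b ^t* *m Q *m b) *m a ^t*.
  by rewrite !mulmxA.
rewrite [b ^t* *m Q *m b]mx11_scalar mul_mx_scalar -scalemxAl scalerA.
by rewrite [in RHS]mxE.
Qed.

(* Over [R[i]] this is [psdmx]. *)
Definition psd n (Q : 'M[C]_n) :=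
  Q ^t* = Q /\ forall x : 'cV[C]_n, 0 <= (x ^t* *m Q *m x) 0 0.

Lemma psd_congruence m n (G : 'M[C]_(m, n)) (Q : 'M[C]_n) :
  psd Q -> psd (G *m Q *m G ^t*).
Proof.
move=> [hermQ Q_ge0]; split; first by rewrite !trmxC_mul trmxCK hermQ mulmxA.
by move=> x; have := Q_ge0 (G ^t* *m x); rewrite trmxC_mul trmxCK !mulmxA.
Qed.

Lemma psd_add n (A B : 'M[C]_n) : psd A -> psd B -> psd (A + B).
Proof.
move=> [hermA A_ge0] [hermB B_ge0]; split; first by rewrite trmxCD hermA hermB.
by move=> x; rewrite mulmxDr mulmxDl mxE addr_ge0.
Qed.

Lemma psd_sum n (I : finType) (P : pred I) (F : I -> 'M[C]_n) :
  (forall i, P i -> psd (F i)) -> psd (\sum_(i | P i) F i).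
Proof.
move=> F_psd; apply: (big_ind (@psd n)) => //; last exact: psd_add.
by split=> [|x]; [rewrite linear0 map_mx0 | rewrite mulmx0 mul0mx mxE].
Qed.

Lemma psd_scale n (p : C) (A : 'M[C]_n) : 0 <= p -> psd A -> psd (p *: A).
Proof.
move=> p_ge0 [hermA A_ge0]; split.
  by rewrite trmxCZ hermA conj_Creal ?ger0_real.
by move=> x; rewrite -scalemxAr -scalemxAl mxE mulr_ge0.
Qed.

Lemma psd_rank1 n (p : C) (y : 'cV[C]_n) : 0 <= p -> psd (p *: (y *m y ^t*)).
Proof.
move=> p_ge0; apply: psd_scale => //.
have psd1 : psd (1%:M : 'M[C]_1).
  by split=> [|x]; rewrite ?trmxC1 ?mulmx1 ?trmxC_mul_self_ge0.
by have := psd_congruence y psd1; rewrite mulmx1.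
Qed.

Lemma psd_det_add1_gt0 n (H : 'M[C]_n) : psd H -> 0 < \det (H + 1%:M).
Proof.
move=> [hermH H_ge0]; set A := H + 1%:M.
have /orthomx_spectralP A_spectral : A \is normalmx.
  apply/hermitian_normalmx/is_hermitianmxP.
  by rewrite expr0 scale1r trmxCD hermH trmxC1.
have P_unitary := spectral_unitarymx A.
have P_unit := spectral_unit A.
set P := spectralmx A in A_spectral P_unitary P_unit.
set d := spectral_diag A in A_spectral.
have diagE : diag_mx d = P *m A *m P ^t*.
  by rewrite [in RHS]A_spectral -invmx_unitary // !mulmxA mulmxV // mul1mx mulmxK.
rewrite A_spectral !det_mulmx det_inv det_diag mulrC mulrA mulrV ?mul1r -?unitmxE //.
(* The eigenvalue [d 0 i] is [1 + p^* H p] for the unit eigenvector [p = (row i P)^*]. *)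
apply: prodr_gt0 => i _.
have -> : d 0 i = diag_mx d i i by rewrite mxE eqxx mulr1n.
rewrite diagE congruence_diag_entry /A mulmxDr mulmxDl mulmx1 mxE.
have -> : (row i P *m (row i P) ^t*) 0 0 = 1.
  have := congruence_diag_entry P 1%:M i.
  by rewrite !mulmx1 (unitarymxP P_unitary) mxE eqxx.
by have := H_ge0 ((row i P)^t*); rewrite trmxCK => ?; rewrite ltr_wpDl.
Qed.

Lemma psd_add1_unitmx n (H : 'M[C]_n) : psd H -> H + 1%:M \in unitmx.
Proof. by move=> H_psd; rewrite unitmxE unitfE gt_eqF ?psd_det_add1_gt0. Qed.

Lemma psd_invmx_add1_quad_ge0 n (H : 'M[C]_n) (a : 'cV[C]_n) : psd H ->
  0 <= (a ^t* *m invmx (H + 1%:M) *m a) 0 0.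
Proof.
move=> H_psd; have A_unit := psd_add1_unitmx H_psd; case: H_psd => hermH H_ge0.
set A := H + 1%:M in A_unit *; set y := invmx A *m a.
have -> : a = A *m y by rewrite /y mulmxA mulmxV // mul1mx.
rewrite trmxC_mul /A trmxCD hermH trmxC1 -/A -mulmxA (mulmxA (invmx A)) mulVmx //.
by rewrite mul1mx /A mulmxDr mulmxDl mulmx1 mxE addr_ge0 ?trmxC_mul_self_ge0.
Qed.

Lemma psd_det_add_rank1_mono n (H : 'M[C]_n) (a : 'cV[C]_n) (s t : C) :
  psd H -> 0 <= s <= t ->
  0 < \det (H + s *: (a *m a ^t*) + 1%:M) <= \det (H + t *: (a *m a ^t*) + 1%:M).
Proof.
move=> H_psd /andP[s_ge0 s_le_t].
have detE r : \det (H + r *: (a *m a ^t*) + 1%:M) =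
    \det (H + 1%:M) * (1 + r * (a ^t* *m invmx (H + 1%:M) *m a) 0 0).
  by rewrite addrAC scalemxAl det_add_rank1 ?psd_add1_unitmx // -scalemxAr mxE.
have q_ge0 := psd_invmx_add1_quad_ge0 a H_psd.
rewrite !detE pmulr_rgt0 ?ler_pM2l ?psd_det_add1_gt0 ?lerD2l ?ler_wpM2r //.
by rewrite ltr_wpDr ?mulr_ge0.
Qed.

Lemma quad_le_trace n (Q : 'M[C]_n) (x : 'cV[C]_n) : psd Q ->
  x ^t* *m x = 1%:M -> (x ^t* *m Q *m x) 0 0 <= \tr Q.
Proof.
move=> [hermQ Q_ge0] x_unit; set P := 1%:M - x *m x ^t*.
have hermP : P ^t* = P by rewrite trmxCB trmxC1 trmxC_mul trmxCK.
have PP : P *m P = P.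
  rewrite mulmxBl mul1mx mulmxBr mulmx1 -!mulmxA (mulmxA (x ^t*)) x_unit mul1mx.
  by rewrite subrr subr0.
have trPQP_ge0 : 0 <= \tr (P *m Q *m P).
  apply: sumr_ge0 => i _; rewrite -{2}hermP congruence_diag_entry.
  by have := Q_ge0 ((row i P) ^t*); rewrite trmxCK.
rewrite -subr_ge0; suff <- : \tr (P *m Q *m P) = \tr Q - (x ^t* *m Q *m x) 0 0 by [].
rewrite mxtrace_mulC mulmxA PP mulmxBl mul1mx linearB /=; congr (_ - _).
by rewrite -trace_mx11 -mulmxA mxtrace_mulC [RHS]mxtrace_mulC mulmxA.
Qed.

End PositiveSemidefinite.

Local Open Scope complex_scope.
Local Open Scope classical_set_scope.

Section SteeringVectors.
Variable R : realType.

Lemma norm_expi (t : R) : `|expi t| = 1.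
Proof. by rewrite normc_def /= cos2Dsin2 sqrtr1. Qed.

Lemma aT_unit N (lam theta : R) (w : 'I_N -> R) : (0 < N)%N ->
  (aT lam theta w) ^t* *m aT lam theta w = 1%:M.
Proof.
move=> N_gt0; apply/matrixP => i j; rewrite !ord1 !mxE /=.
transitivity (\sum_(n < N) ((N%:R : R)^-1)%:C).
  apply: eq_bigr => n _; rewrite !mxE mulrC -sqr_normc normrM norm_expi mulr1.
  rewrite ger0_norm ?ler0c ?invr_ge0 ?sqrtr_ge0 //.
  by rewrite -rmorphXn /= exprVn sqr_sqrtr ?ler0n.
by rewrite sumr_const card_ord -rmorphMn /= -mulr_natr mulVf ?pnatr_eq0 -?lt0n.
Qed.

Lemma chan_single_path M N L (lam : R) (gamma : 'I_L -> R[i])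
    (beta theta : 'I_L -> R) (w : 'I_N -> R) (l0 : 'I_L) :
  (forall l : 'I_L, l = l0) ->
  chan M lam gamma beta theta w =
  ((Num.sqrt ((M * N)%:R : R))%:C * gamma l0) *:
     (aR M lam (beta l0) *m (aT lam (theta l0) w) ^t*).
Proof.
move=> l0_unique.
have sum_l0 (F : 'I_L -> R[i]) : \sum_l F l = F l0.
  by rewrite (bigD1 l0) //= big1 ?addr0 // => l; rewrite (l0_unique l) eqxx.
apply/matrixP => i j; rewrite !mxE sum_l0 big_ord1 !mxE sum_l0 !mxE eqxx mulr1n.
by ring.
Qed.

Lemma antenna_positions_exist N (W : R) : 0 < W ->
  exists w : 'I_N -> R, (forall n, 0 <= w n <= W) /\ injective w.
Proof.
move=> W_gt0; exists (fun n => W * (n%:R / N%:R)); split=> [n | n n'].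
  have N_gt0 : (0 < N%:R :> R) by rewrite ltr0n (leq_ltn_trans _ (ltn_ord n)).
  apply/andP; split; first by rewrite mulr_ge0 ?divr_ge0 ?ler0n ?ltW.
  by rewrite ler_piMr ?(ltW W_gt0) // ler_pdivrMr // mul1r ler_nat ltnW.
have N_neq0 : N%:R != 0 :> R by rewrite pnatr_eq0 -lt0n (leq_ltn_trans _ (ltn_ord n)).
move/(mulfI (lt0r_neq0 W_gt0))/(mulIf (invr_neq0 N_neq0))/eqP.
by rewrite eqr_nat => /eqP/val_inj.
Qed.

End SteeringVectors.

Lemma ln_Re_le (R : realType) (x y : R[i]) :
  0 < x <= y -> ln (complex.Re x) <= ln (complex.Re y).
Proof.
case/andP=> x_gt0 x_le_y; have := lt_le_trans x_gt0 x_le_y.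
move: x_gt0 x_le_y; rewrite !ltcE !lecE /=.
by move=> /andP[_ Rex_gt0] /andP[_ Rex_le] /andP[_ Rey_gt0]; rewrite ler_ln ?posrE.
Qed.

Lemma ln_det_add_rank1_mono (R : realType) n (H : 'M[R[i]]_n) (a : 'cV[R[i]]_n)
    (s t : R[i]) : psd H -> 0 <= s <= t ->
  ln (complex.Re (\det (H + s *: (a *m a ^t*) + 1%:M))) <=
  ln (complex.Re (\det (H + t *: (a *m a ^t*) + 1%:M))).
Proof. by move=> H_psd st; apply/ln_Re_le/psd_det_add_rank1_mono. Qed.

Section SinglePathUser.
Variables (R : realType) (M N L : nat) (lam P W : R) (gamma : 'I_L -> R[i]).
Variables (beta theta : 'I_L -> R) (l0 : 'I_L).
Hypotheses (l0_unique : forall l : 'I_L, l = l0) (N_gt0 : (0 < N)%N).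

Local Notation G w := (chan M lam gamma beta theta w).
Local Notation a := (aR M lam (beta l0)).
Local Notation b w := (aT lam (theta l0) w).
Local Notation pmax := ((M * N)%:R * P%:C * `|gamma l0| ^+ 2).

Lemma single_path_gram (Q : 'M[R[i]]_N) (w : 'I_N -> R) :
  G w *m Q *m (G w) ^t* =
  ((M * N)%:R * `|gamma l0| ^+ 2 * ((b w) ^t* *m Q *m b w) 0 0) *: (a *m a ^t*).
Proof.
rewrite (chan_single_path _ _ _ _ _ w l0_unique) congruence_rank1; congr (_ * _ *: _).
rewrite -normCK normrM ger0_norm ?ler0c ?sqrtr_ge0 // exprMn -rmorphXn.
by rewrite sqr_sqrtr ?ler0n // rmorph_nat.
Qed.

Lemma single_path_gram_le (Q : 'M[R[i]]_N) (w : 'I_N -> R) :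
  user_feasible P W Q w ->
  exists2 s, 0 <= s <= pmax & G w *m Q *m (G w) ^t* = s *: (a *m a ^t*).
Proof.
case=> Q_psd trQ_le _ _; rewrite single_path_gram; eexists; last reflexivity.
have quad_le := quad_le_trace Q_psd (aT_unit lam (theta l0) w N_gt0).
rewrite mulr_ge0 ?mulr_ge0 ?ler0n ?exprn_ge0 ?Q_psd.2 //=.
rewrite mulrAC ler_wpM2r ?exprn_ge0 //.
by rewrite ler_wpM2l ?ler0n ?(le_trans quad_le).
Qed.

Lemma single_path_gram_max : 0 < P -> 0 < W ->
  exists (Q : 'M[R[i]]_N) (w : 'I_N -> R),
    user_feasible P W Q w /\ G w *m Q *m (G w) ^t* = pmax *: (a *m a ^t*).
Proof.
(* Beamforming along the single transmit direction attains the bound. *)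
move=> P_gt0 W_gt0; have [w [w_range w_inj]] := antenna_positions_exist N W_gt0.
have b_unit := aT_unit lam (theta l0) w N_gt0.
exists (P%:C *: (b w *m (b w) ^t*)), w; split.
  split=> //; first by apply: psd_rank1; rewrite ler0c ltW.
  by rewrite mxtraceZ mxtrace_mulC b_unit mxtrace1 mulr1.
rewrite single_path_gram -scalemxAr -scalemxAl mxE !mulmxA b_unit mul1mx b_unit.
by rewrite mxE eqxx mulr1 mulrAC.
Qed.

End SinglePathUser.

Theorem lemma1 (R : realType) (M U : nat) (lam : R)
  (N L : 'I_U -> nat) (P W : 'I_U -> R)
  (gamma : forall v : 'I_U, 'I_(L v) -> R[i])
  (beta theta : forall v : 'I_U, 'I_(L v) -> R)
  (hM : (0 < M)%N) (hlam : 0 < lam)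
  (hN : forall v, (0 < N v)%N)
  (hP : forall v, 0 < P v) (hW : forall v, 0 < W v)
  (hbeta : forall v l, 0 <= beta v l <= pi)
  (htheta : forall v l, 0 <= theta v l <= pi)
  (u : 'I_U) (hLu : L u = 1%N) :
  let G := fun (v : 'I_U) (w : 'I_(N v) -> R) =>
             chan M lam (gamma v) (beta v) (theta v) w in
  let l0 : 'I_(L u) := cast_ord (esym hLu) ord0 in
  ereal_sup
    [set x : \bar R | exists (Q : forall v : 'I_U, 'M[R[i]]_(N v))
                             (w : forall v : 'I_U, 'I_(N v) -> R),
       (forall v, user_feasible (P v) (W v) (Q v) (w v)) /\
       x = (ln (complex.Re (\det (\sum_(v < U) (G v (w v) *m Q v *m (G v (w v)) ^t*)
                          + 1%:M))))%:E]
  =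
  ereal_sup
    [set x : \bar R | exists (Q : forall v : 'I_U, 'M[R[i]]_(N v))
                             (w : forall v : 'I_U, 'I_(N v) -> R),
       (forall v, v != u -> user_feasible (P v) (W v) (Q v) (w v)) /\
       x = (ln (complex.Re (\det (\sum_(v < U | v != u)
                              (G v (w v) *m Q v *m (G v (w v)) ^t*)
                          + ((M * N u)%:R * (P u)%:C * `|gamma u l0| ^+ 2) *:
                              (aR M lam (beta u l0) *m (aR M lam (beta u l0)) ^t*)
                          + 1%:M))))%:E].
Proof.
move=> G l0.
have l0_unique (l : 'I_(L u)) : l = l0.
  by apply/val_inj; case: l => -[|k] //=; rewrite hLu.
apply/le_anti/andP; split; apply: ge_ereal_sup => _ [Q [w [feas ->]]].
- apply: le_ereal_sup_tmp; eexists.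
    by exists Q, w; split=> [v _|]; [exact: feas | reflexivity].
  rewrite (bigD1 u) //=.
  have [s s_range ->] :=
    single_path_gram_le M lam (gamma u) (beta u) (theta u) l0_unique (hN u) (feas u).
  rewrite [_ + \sum_(v | _) _]addrC lee_fin ln_det_add_rank1_mono //.
  by apply: psd_sum => v _; apply: psd_congruence; case: (feas v).
- have [Qu [wu [feas_u gram_u]]] := single_path_gram_max M lam (gamma u) (beta u)
    (theta u) l0_unique (hN u) (hP u) (hW u).
  apply: le_ereal_sup_tmp; eexists.
    exists (dfwith Q u Qu), (dfwith w u wu); split=> [v|]; last reflexivity.
    have [<-|u_neq_v] := eqVneq u v; first by rewrite !dfwithin.
    by rewrite !dfwithout //; apply: feas; rewrite eq_sym.
  have sum_dfwith : \sum_(v | v != u)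
      G v (dfwith w u wu v) *m dfwith Q u Qu v *m (G v (dfwith w u wu v)) ^t* =
    \sum_(v | v != u) G v (w v) *m Q v *m (G v (w v)) ^t*.
    by apply: eq_bigr => v v_neq_u; rewrite !dfwithout // eq_sym.
  by rewrite (bigD1 u isT) /= !dfwithin gram_u sum_dfwith addrC.
Qed.
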